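(* Let $\omega\in\mathbb{F}_8$ be a root of $y^3+y+1$, let $m\in\mathbb{N}$ and let $L,M,N$ be nonempty subsets of $[m]$ such that at least two of the sets $L\setminus(M\cup N)$, $M\setminus(N\cup L)$, $N\setminus(L\cup M)$ are nonempty. Let $D=\Delta_L+\omega\Delta_M+\omega^2\Delta_N\subseteq\mathbb{F}_8^m$ and $D^*=D\setminus\{0\}$. Then $C_{D^*}$ is a $3$-weight linear code over $\mathbb{F}_8$ of length $2^{|L|+|M|+|N|}-1$, dimension $|L\cup M\cup N|$ and minimum distance $2^{|L|+|M|+|N|-1}$; its codewords have weights $0$, $2^{|L|+|M|+|N|-1}$, $6\cdot 2^{|L|+|M|+|N|-3}$ and $7\cdot 2^{|L|+|M|+|N|-3}$. Moreover, if $A_i$ denotes the number of codewords of $C_{D^*}$ of weight $i$ and $Z_i=|\{v\in\mathbb{F}_8^m: wt(c_{D^*}(v))=i\}|$ for $0\le i\le|D^*|$, then $Z_0=2^{3(m-|L\cup M\cup N|)}$ and $Z_i=Z_0A_i$.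
   Context: $[m]=\{1,\dots,m\}$. For $w\in\mathbb{F}_2^m$, $\mathrm{Supp}(w)=\{i: w_i\neq0\}$; for $L\subseteq[m]$, $\Delta_L=\{w\in\mathbb{F}_2^m:\mathrm{Supp}(w)\subseteq L\}$. For $A,B,C\subseteq\mathbb{F}_2^m$, $A+\omega B+\omega^2C=\{a+\omega b+\omega^2c: a\in A,b\in B,c\in C\}$. For an ordered finite set $P\subseteq\mathbb{F}_8^m$, $c_P(v)=(v\cdot d)_{d\in P}$ with $v\cdot d=\sum_iv_id_i$, and $C_P=\{c_P(v): v\in\mathbb{F}_8^m\}$. An $l$-weight code is one whose nonzero codewords take exactly $l$ distinct Hamming weights. *)

From HB Require Import structures.
From mathcomp Require Import all_boot all_order all_algebra all_field.
Set Implicit Arguments. Unset Strict Implicit. Unset Printing Implicit Defensive.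
Import GRing.Theory.
Local Open Scope ring_scope.

Section Codes.
Variables (F : finFieldType) (m : nat).
Local Notation V := 'rV[F]_m.

Definition dot (v d : V) : F := \sum_(i < m) v 0 i * d 0 i.

Definition Delta (L : {set 'I_m}) : {set V} :=
  [set w : V | [forall i, ((w 0 i == 0) || (w 0 i == 1)) &&
                          ((w 0 i != 0) ==> (i \in L))]].

Definition Dset (om : F) (A B C : {set V}) : {set V} :=
  [set x : V | [exists a in A, exists b in B, exists c in C,
                 x == a + om *: b + om ^+ 2 *: c]].

Definition cP (P : {set V}) (v : V) : 'rV[F]_#|P| :=
  \row_(i < #|P|) dot v (enum_val i).

Definition CP (P : {set V}) : {set 'rV[F]_#|P|} := [set cP P v | v : V].

Definition CPvs (P : {set V}) : {vspace 'rV[F]_#|P|} :=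
  (<< [seq cP P v | v : V] >>)%VS.
End Codes.

Definition wt (F : finFieldType) n (c : 'rV[F]_n) : nat :=
  #|[set i : 'I_n | c 0 i != 0]|.

Definition weights (F : finFieldType) n (C : {set 'rV[F]_n}) : seq nat :=
  undup [seq wt c | c <- enum C & c != 0].

Definition l_weight (F : finFieldType) n (C : {set 'rV[F]_n}) (l : nat) : Prop :=
  size (weights C) = l.

(* minimum distance = minimum weight of a nonzero codeword (linear code);
   n (the length) is a neutral upper bound *)
Definition min_dist (F : finFieldType) n (C : {set 'rV[F]_n}) : nat :=
  \big[minn/n]_(c in C | c != 0) wt c.

Definition Acount (F : finFieldType) n (C : {set 'rV[F]_n}) (i : nat) : nat :=
  #|[set c in C | wt c == i]|.

Definition Zcount (F : finFieldType) m (P : {set 'rV[F]_m}) (i : nat) : nat :=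
  #|[set v : 'rV[F]_m | wt (cP P v) == i]|.

From mathcomp Require Import all_boot all_order all_algebra all_field.
From mathcomp Require Import ring zify.
Set Implicit Arguments. Unset Strict Implicit. Unset Printing Implicit Defensive.
Import GRing.Theory.
Local Open Scope ring_scope.

(* Since 1, om and om^2 are linearly independent over F_2, the elements of D are the
   a + om b + om^2 c with a, b, c the 0/1 indicator vectors of subsets of L, M, N, given
   injectively; so |D| = 2^s and D is an additive group.  For fixed v the map d |-> v . d
   is additive on D, hence its image is a subgroup of (F, +) of order 2^j, j <= 3, each
   value being taken 2^(s-j) times: c_D*(v) has weight 2^s - 2^(s-j).  For v the
   indicator of S the image has order 2^(number of L, M, N met by S), and S = set0, a
   private element, two private elements of different sets, and [m] realize j = 0..3.
   Finally v |-> c_D*(v) is F-linear with kernel the v vanishing on L :|: M :|: N,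
   which gives Z_0, the dimension, and Z_i = Z_0 A_i by counting fibres. *)

Section AdditiveFibers.
Variables (aT rT : finZmodType) (f : aT -> rT) (G : {set aT}).
Hypotheses (fB : {morph f : x y / x - y}) (GB : {in G &, forall x y, x - y \in G}).

Lemma card_additive_fiber x0 : x0 \in G ->
  #|[set x in G | f x == f x0]| = #|[set x in G | f x == 0]|.
Proof.
move=> Gx0; have f0 : f 0 = 0 by rewrite -(subrr 0) fB subrr.
have fN x : f (- x) = - f x by rewrite -sub0r fB f0 sub0r.
have GN x : x \in G -> - x \in G by move=> Gx; rewrite -sub0r GB // -(subrr x) GB.
rewrite -(card_imset _ (addIr (- x0))); apply: eq_card => z; rewrite !inE.
apply/imsetP/andP => [[x /setIdP [Gx /eqP fx] ->] | [Gz /eqP fz]].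
  by rewrite GB // fB fx subrr.
exists (z + x0); last by rewrite addrK.
by rewrite inE -{1 2}[x0]opprK GB ?GN // fB fN fz sub0r opprK eqxx.
Qed.

Lemma card_additive_preim (P : pred rT) :
  #|[set x in G | P (f x)]| =
  (#|[set x in G | f x == 0%R]| * #|[set y in f @: G | P y]|)%N.
Proof.
rewrite -[LHS]sum1_card (partition_big f [in [set y in f @: G | P y]]) => [|x].
  rewrite mulnC -sum_nat_const; apply: eq_bigr => _ /setIdP [/imsetP [x0 Gx0 ->] Pfx0].
  rewrite sum1_card -(card_additive_fiber Gx0); apply: eq_card => x.
  by rewrite unfold_in !inE; case: (f x =P f x0) => [-> | _]; rewrite ?Pfx0 ?andbT ?andbF.
by rewrite !inE => /andP [Gx ->]; rewrite imset_f.
Qed.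

End AdditiveFibers.

Lemma card_additive_preimT (aT rT : finZmodType) (f : aT -> rT) (P : pred rT) :
  {morph f : x y / x - y} ->
  #|[set x | P (f x)]| = (#|[set x | f x == 0%R]| * #|[set y in f @: [set: aT] | P y]|)%N.
Proof.
move=> fB; have GB : {in [set: aT] &, forall x y, x - y \in [set: aT]} by move=> *; rewrite inE.
have eqT (Q : pred aT) : #|[set x | Q x]| = #|[set x in [set: aT] | Q x]|.
  by apply: eq_card => x; rewrite !inE.
by rewrite (eqT (fun x => P (f x))) (eqT (fun x => f x == 0)) (card_additive_preim fB GB).
Qed.

Lemma wt_eq0 (F : finFieldType) n (c : 'rV[F]_n) : (wt c == 0%N) = (c == 0).
Proof.
rewrite /wt cards_eq0; apply/eqP/eqP => [c0 | ->].
  apply/rowP => i; rewrite mxE; apply/eqP.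
  by apply: contraFT (in_set0 i) => ci; rewrite -c0 inE.
by apply/setP => i; rewrite !inE mxE eqxx.
Qed.

Lemma card_implyb (c : bool) : #|[set b : bool | b ==> c]| = (2 ^ c)%N.
Proof.
case: c.
  have -> : [set b : bool | b ==> true] = setT by apply/setP => b; rewrite !inE implybT.
  by rewrite cardsT card_bool.
have -> : [set b : bool | b ==> false] = [set false] by apply/setP => b; rewrite !inE implybF.
by rewrite cards1.
Qed.

Lemma odd_card_setI_subset (T : finType) (S X : {set T}) (b : bool) :
  (exists2 A : {set T}, A \subset X & odd #|A :&: S| = b) <-> (b ==> (X :&: S != set0)).
Proof.
split=> [[A sAX <-] | ].
  apply/implyP; apply: contraTneq => XS0; rewrite -(setIidPl sAX) -setIA XS0.
  by rewrite setI0 cards0.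
case: b => /= [/set0Pn [k /setIP [kX kS]] | _].
  by exists [set k]; rewrite ?sub1set // (setIidPl _) ?cards1 // sub1set.
by exists set0; rewrite ?sub0set ?set0I ?cards0.
Qed.

Lemma in_setDU (T : finType) (A B : {set T}) x :
  (x \in (A :\: B) :|: (B :\: A)) = (x \in A) (+) (x \in B).
Proof. by rewrite !inE; case: (x \in A); case: (x \in B). Qed.

Lemma subn_exp2_iota n : (3 <= n)%N ->
  [seq 2 ^ n - 2 ^ (n - j) | j <- iota 0 4]%N =
  [:: 0; 2 ^ n.-1; 6 * 2 ^ (n - 3); 7 * 2 ^ (n - 3)]%N.
Proof.
case: n => [|[|[|n]]] // _; rewrite /= !subSS !subn0 subnn !expnS; congr [:: _; _; _; _]; lia.
Qed.

Section Codes.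
Variables (F : finFieldType) (m : nat).
Local Notation V := 'rV[F]_m.
Implicit Types (P : {set V}) (u v x y : V) (S A X : {set 'I_m}).

Definition genmx (P : {set V}) : 'M[F]_(m, #|P|) :=
  \matrix_(k < m, i < #|P|) (enum_val i : V) 0 k.

Lemma cP_mulmx P v : cP P v = v *m genmx P.
Proof. by apply/rowP => i; rewrite !mxE; apply: eq_bigr => k _; rewrite mxE. Qed.

Lemma cPB P : {morph cP P : u v / u - v}.
Proof. by move=> u v; rewrite !cP_mulmx mulmxBl. Qed.

Lemma CP_CPvs P c : (c \in CP P) = (c \in CPvs P).
Proof.
pose f : 'Hom(V, 'rV[F]_#|P|) := linfun (mulmxr (genmx P)).
apply/imsetP/idP => [[v _ ->] | Cc].
  by apply: memv_span; apply/mapP; exists v; rewrite ?mem_enum.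
have /subvP/(_ c Cc)/memv_imgP [u _ ->] : (CPvs P <= limg f)%VS.
  apply/span_subvP => _ /mapP [v _ ->].
  by rewrite cP_mulmx -[v *m _]/(mulmxr _ v) -lfunE memv_img ?memvf.
by exists u; rewrite // lfunE /= cP_mulmx.
Qed.

Lemma CPE P : CP P = cP P @: [set: V].
Proof. by apply/setP => c; apply/imsetP/imsetP => [] [v _ ->]; exists v. Qed.

Lemma Zcount0 P : Zcount P 0 = #|[set v | cP P v == 0]|.
Proof. by apply: eq_card => v; rewrite !inE wt_eq0. Qed.

Lemma Zcount_mul P i : Zcount P i = (Zcount P 0 * Acount (CP P) i)%N.
Proof. by rewrite Zcount0 CPE; apply: card_additive_preimT (cPB P). Qed.

Lemma card_CP_mul_Zcount0 P : (#|CP P| * Zcount P 0)%N = (#|F| ^ m)%N.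
Proof.
have cardV : #|[set v : V | predT (cP P v)]| = (#|F| ^ m)%N.
  by rewrite -[in RHS](mul1n m) -card_mx; apply: eq_card => v; rewrite inE.
rewrite -cardV (card_additive_preimT _ (cPB P)) -CPE Zcount0 mulnC.
by congr (_ * _)%N; apply: eq_card => c; rewrite !inE andbT.
Qed.

Lemma cP_eq0 P v : (cP P v == 0) = [forall d in P, dot v d == 0].
Proof.
apply/eqP/forall_inP => [cv0 d Pd | dv0].
  by have /rowP/(_ (enum_rank_in Pd d)) := cv0; rewrite !mxE enum_rankK_in // => ->.
by apply/rowP => i; rewrite !mxE; apply/eqP/dv0/enum_valP.
Qed.

Lemma wt_cP P v : wt (cP P v) = #|[set d in P | dot v d != 0]|.
Proof.
rewrite /wt -(card_imset _ enum_val_inj); apply: eq_card => d; rewrite inE.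
apply/imsetP/andP => [[i] | [Pd dv0]].
  by rewrite inE mxE => ? ->; split; rewrite ?enum_valP.
by exists (enum_rank_in Pd d); rewrite ?inE ?mxE enum_rankK_in.
Qed.

Lemma card_rV_vanishing (S : {set 'I_m}) :
  #|[set v : V | [forall k in S, v 0 k == 0]]| = (#|F| ^ (m - #|S|))%N.
Proof.
have -> : (m - #|S| = #|~: S|)%N by have := cardsC S; rewrite card_ord; lia.
have row_inj : injective (fun f : {ffun 'I_m -> F} => \row_k f k : V).
  by move=> f g /rowP fg; apply/ffunP => k; have := fg k; rewrite !mxE.
rewrite -cardsT -(card_pffun_on 0) -(card_imset _ row_inj); apply: eq_card => v.
rewrite inE; apply/forall_inP/imsetP => [v0 | [f /pffun_onP [/subsetP sf _] ->] k kS].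
  exists [ffun k => v 0 k]; last by apply/rowP => k; rewrite !mxE ffunE.
  apply/pffun_onP; split=> [|? _]; last by rewrite inE.
  by apply/subsetP => k; rewrite !inE ffunE; apply: contra => kS; apply: v0.
by rewrite mxE; apply: contraTT kS => /sf; rewrite inE.
Qed.

Lemma dot0r v : dot v 0 = 0.
Proof. by rewrite /dot big1 // => k _; rewrite mxE mulr0. Qed.

Lemma dotDr v : {morph dot v : x y / x + y}.
Proof. by move=> x y; rewrite /dot -big_split; apply: eq_bigr => k _; rewrite !mxE mulrDr. Qed.

Lemma dotBr v : {morph dot v : x y / x - y}.
Proof. by move=> x y; rewrite /dot -sumrB; apply: eq_bigr => k _; rewrite !mxE mulrBr. Qed.

Lemma dotZr v a x : dot v (a *: x) = a * dot v x.
Proof. by rewrite /dot mulr_sumr; apply: eq_bigr => k _; rewrite !mxE mulrCA. Qed.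

Definition ind (A : {set 'I_m}) : V := \row_k (k \in A)%:R.

Lemma dot_indr v A : dot v (ind A) = \sum_(k in A) v 0 k.
Proof.
rewrite /dot [RHS]big_mkcond; apply: eq_bigr => k _; rewrite mxE.
by case: (k \in A); rewrite ?mulr1 ?mulr0.
Qed.

Lemma sum_ind S A : \sum_(k in A) ind S 0 k = #|A :&: S|%:R.
Proof.
rewrite -sumr_const big_mkcond [RHS]big_mkcond; apply: eq_bigr => k _.
by rewrite !inE mxE; case: (k \in A); case: (k \in S).
Qed.

Lemma Delta_ind X : Delta F X = ind @: powerset X.
Proof.
apply/setP => a; rewrite inE; apply/forallP/imsetP => [a01 | [A /[!inE] /subsetP sAX ->] k].
  exists [set k | a 0 k == 1].
    rewrite inE; apply/subsetP => k; rewrite inE => /eqP ak.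
    by have /andP [_ /implyP] := a01 k; apply; rewrite ak oner_neq0.
  apply/rowP => k; rewrite !mxE inE.
  by have /andP [/orP [] /eqP -> _] := a01 k; rewrite ?eqxx // eq_sym oner_eq0.
by rewrite mxE; case: (boolP (k \in A)) => kA; rewrite ?eqxx ?orbT //= oner_neq0 sAX.
Qed.

End Codes.

Section ThreeWeightCode.
Variables (F : finFieldType) (om : F).
Hypotheses (HF : #|F| = 8%N) (Hom : om ^+ 3 + om + 1 = 0).

Lemma pchar2F : 2 \in [pchar F].
Proof. exact: (@card_finPcharP _ 2 3). Qed.

Lemma natr_odd n : n%:R = (odd n)%:R :> F.
Proof. by rewrite -(GRing.natr_mod_pchar pchar2F) modn2. Qed.

Lemma natr_addb (x y : bool) : (x (+) y)%:R = x%:R + y%:R :> F.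
Proof. by case: x; case: y; rewrite ?addr0 ?add0r // addrr_pchar2 ?pchar2F. Qed.

Definition omcomb (x y z : bool) : F := x%:R + om * y%:R + om ^+ 2 * z%:R.

Lemma omcombD x y z x' y' z' :
  omcomb x y z + omcomb x' y' z' = omcomb (x (+) x') (y (+) y') (z (+) z').
Proof. by rewrite /omcomb !natr_addb; ring. Qed.

Lemma om_neq0 : om != 0.
Proof. by apply: contraPneq Hom => ->; apply/eqP; rewrite expr0n !add0r oner_eq0. Qed.

Lemma omcomb_eq0 x y z : (omcomb x y z == 0) = ~~ [|| x, y | z].
Proof.
have om1 : 1 + om != 0.
  apply: contraPneq Hom => /eqP; rewrite addr_eq0 oppr_pchar2 ?pchar2F // => /eqP <-.
  by apply/eqP; rewrite expr1n addrr_pchar2 ?pchar2F // add0r oner_eq0.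
have sq1om : (1 + om) ^+ 2 = 1 + om ^+ 2.
  by rewrite sqrrD expr1n mul1r mulr2n addrr_pchar2 ?pchar2F ?addr0.
have om2 : 1 + om + om ^+ 2 != 0.
  apply: contra om1 => /eqP om2; rewrite -sqrf_eq0 sq1om.
  have -> : 1 + om ^+ 2 = om ^+ 3 + om + 1 - om * (1 + om + om ^+ 2) + 2%:R * om ^+ 2.
    by ring.
  by rewrite Hom om2 (pcharf0 pchar2F) !mul0r mulr0 subr0 addr0.
case: x; case: y; case: z; rewrite /omcomb /= ?mulr1 ?mulr0 ?addr0 ?add0r ?oner_eq0 ?eqxx //.
all: apply/negbTE.
- exact: om2.
- exact: om1.
- by rewrite -sq1om sqrf_eq0.
- have -> : om + om ^+ 2 = om * (1 + om) by ring.
  exact: mulf_neq0 om_neq0 om1.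
- exact: om_neq0.
- exact: expf_neq0 _ om_neq0.
Qed.

Lemma omcomb_inj x y z x' y' z' : omcomb x y z = omcomb x' y' z' ->
  [/\ x = x', y = y' & z = z'].
Proof.
move=> eq_comb; have /eqP := addrr_pchar2 pchar2F (omcomb x y z).
rewrite {2}eq_comb omcombD omcomb_eq0 !negb_or !negb_add.
by case/and3P => /eqP -> /eqP -> /eqP ->.
Qed.

Variables (m : nat) (L M N : {set 'I_m}).
Local Notation V := 'rV[F]_m.
Local Notation D := (Dset om (Delta F L) (Delta F M) (Delta F N)).
Local Notation Ds := (D :\ 0).
Local Notation s := (#|L| + #|M| + #|N|)%N.
Local Notation U := (L :|: M :|: N).
Implicit Types (v d : V) (S X A B C : {set 'I_m}).

Definition dv A B C : V := ind F A + om *: ind F B + om ^+ 2 *: ind F C.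

Lemma dvE A B C k : dv A B C 0 k = omcomb (k \in A) (k \in B) (k \in C).
Proof. by rewrite !mxE. Qed.

Lemma dv_inj A B C A' B' C' : dv A B C = dv A' B' C' -> [/\ A = A', B = B' & C = C'].
Proof.
move=> eq_dv; have eq_mem k :
    [/\ (k \in A) = (k \in A'), (k \in B) = (k \in B') & (k \in C) = (k \in C')].
  by apply: omcomb_inj; rewrite -!dvE eq_dv.
by split; apply/setP => k; case: (eq_mem k).
Qed.

Lemma memDP d :
  reflect (exists A B C, [/\ A \subset L, B \subset M, C \subset N & d = dv A B C]) (d \in D).
Proof.
rewrite inE !Delta_ind; apply: (iffP existsP) => [[_ /andP [/imsetP [A /[!inE] sA ->]]] | ].
  move=> /existsP [_ /andP [/imsetP [B /[!inE] sB ->]]].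
  by move=> /existsP [_ /andP [/imsetP [C /[!inE] sC ->]]] /eqP ->; exists A, B, C.
move=> [A [B [C [sA sB sC ->]]]]; exists (ind F A); rewrite imset_f ?inE //=.
apply/existsP; exists (ind F B); rewrite imset_f ?inE //=.
by apply/existsP; exists (ind F C); rewrite imset_f ?inE ?eqxx.
Qed.

Lemma card_D : #|D| = (2 ^ s)%N.
Proof.
pose dv3 (t : {set 'I_m} * {set 'I_m} * {set 'I_m}) := dv t.1.1 t.1.2 t.2.
have -> : D = dv3 @: setX (setX (powerset L) (powerset M)) (powerset N).
  apply/setP => d; apply/memDP/imsetP => [[A [B [C [sA sB sC ->]]]] | [[[A B] C]]].
    by exists (A, B, C); rewrite ?inE ?sA ?sB ?sC.
  by rewrite !inE /= => /andP [/andP [sA sB] sC] ->; exists A, B, C.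
rewrite card_in_imset => [|[[A B] C] [[A' B'] C'] _ _ /dv_inj /= [-> -> ->] //].
by rewrite !cardsX !card_powerset !expnD.
Qed.

Lemma mem0D : 0 \in D.
Proof.
apply/memDP; exists set0, set0, set0; rewrite !sub0set; split=> //.
by apply/rowP => k; rewrite dvE !inE mxE /omcomb /= !mulr0 !addr0.
Qed.

Lemma memDB : {in D &, forall d d', d - d' \in D}.
Proof.
move=> _ _ /memDP [A [B [C [sA sB sC ->]]]] /memDP [A' [B' [C' [sA' sB' sC' ->]]]].
have sDU (X Y Z : {set 'I_m}) :
    X \subset Z -> Y \subset Z -> (X :\: Y) :|: (Y :\: X) \subset Z.
  by move=> sXZ sYZ; rewrite subUset !(subset_trans (subsetDl _ _)).
apply/memDP; do 3!eexists.
split; [exact: sDU sA sA' | exact: sDU sB sB' | exact: sDU sC sC' |].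
by apply/rowP => k; rewrite mxE !dvE mxE dvE oppr_pchar2 ?pchar2F // omcombD !in_setDU.
Qed.

Lemma dot_dv v A B C : dot v (dv A B C) =
  \sum_(k in A) v 0 k + om * \sum_(k in B) v 0 k + om ^+ 2 * \sum_(k in C) v 0 k.
Proof. by rewrite /dv !dotDr !dotZr !dot_indr. Qed.

Definition dot_image v := dot v @: D.
Definition dot_kernel v := [set d in D | dot v d == 0].

Lemma card_D_dot v : #|D| = (#|dot_image v| * #|dot_kernel v|)%N.
Proof.
transitivity #|[set d in D | predT (dot v d)]|; first by apply: eq_card => d; rewrite !inE andbT.
rewrite (card_additive_preim (dotBr v) memDB) mulnC; congr (_ * _)%N.
by apply: eq_card => y; rewrite !inE andbT.
Qed.

Lemma dot_image_pow v : exists2 j, (j <= 3)%N & #|dot_image v| = (2 ^ j)%N.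
Proof.
have : (#|dot_image v| %| 2 ^ s)%N by rewrite -card_D (card_D_dot v) dvdn_mulr.
case/(dvdn_pfactor _ _ (isT : prime 2)) => j _ Wj; exists j => //.
by rewrite -(@leq_exp2l 2) // -Wj (_ : 2 ^ 3 = #|F|)%N ?max_card.
Qed.

Lemma wt_cPD v j : #|dot_image v| = (2 ^ j)%N -> wt (cP Ds v) = (2 ^ s - 2 ^ (s - j))%N.
Proof.
move=> Wj; have sKD : dot_kernel v \subset D by apply/subsetP => d /setIdP [].
have -> : wt (cP Ds v) = (#|D| - #|dot_kernel v|)%N.
  rewrite wt_cP -(setIidPr sKD) -cardsD; apply: eq_card => d.
  rewrite in_set in_setD1 in_setD [d \in dot_kernel v]in_set.
  case: (d =P 0) => [-> | _]; rewrite ?dot0r ?eqxx /= ?andbT ?andNb //.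
  by case: (d \in D); rewrite /= ?andbT.
have js : (j <= s)%N by rewrite -(@dvdn_Pexp2l 2) // -Wj -card_D (card_D_dot v) dvdn_mulr.
rewrite card_D; congr (_ - _)%N; apply/eqP.
by rewrite -(eqn_pmul2l (expn_gt0 2 j)) -expnD subnKC // -Wj -card_D_dot card_D.
Qed.

Lemma dot_ind_dv S A B C :
  dot (ind F S) (dv A B C) = omcomb (odd #|A :&: S|) (odd #|B :&: S|) (odd #|C :&: S|).
Proof. by rewrite dot_dv !sum_ind /omcomb -!natr_odd. Qed.

Definition meet_count S := ((L :&: S != set0) + (M :&: S != set0) + (N :&: S != set0))%N.

Lemma card_dot_image_ind S : #|dot_image (ind F S)| = (2 ^ meet_count S)%N.
Proof.
pose T X := [set b : bool | b ==> (X :&: S != set0)].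
pose omcomb3 (t : bool * bool * bool) := omcomb t.1.1 t.1.2 t.2.
have omcomb3_inj : injective omcomb3 by move=> [[? ?] ?] [[? ?] ?] /omcomb_inj /= [-> -> ->].
have oddT X A : A \subset X -> odd #|A :&: S| ==> (X :&: S != set0).
  by move=> sAX; apply/(odd_card_setI_subset S X); exists A.
have -> : dot_image (ind F S) = omcomb3 @: setX (setX (T L) (T M)) (T N).
  apply/setP => y; apply/imsetP/imsetP => [[_ /memDP [A [B [C [sA sB sC ->]]]] ->] | ].
    exists (odd #|A :&: S|, odd #|B :&: S|, odd #|C :&: S|); rewrite ?dot_ind_dv //.
    by rewrite !inE /= (oddT _ _ sA) (oddT _ _ sB) (oddT _ _ sC).
  move=> [[[x y'] z] /[!inE] /= /andP [/andP [xL yM] zN] ->].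
  have [A sA <-] := (odd_card_setI_subset S L x).2 xL.
  have [B sB <-] := (odd_card_setI_subset S M y').2 yM.
  have [C sC <-] := (odd_card_setI_subset S N z).2 zN.
  by exists (dv A B C); rewrite ?dot_ind_dv //; apply/memDP; exists A, B, C.
by rewrite card_imset // !cardsX !card_implyb -!expnD.
Qed.

Lemma dot_D_eq0 v : [forall d in D, dot v d == 0] = [forall k in U, v 0 k == 0].
Proof.
apply/forall_inP/forall_inP => [v0 k | v0 _ /memDP [A [B [C [sA sB sC ->]]]]].
  have v0dv A B C : A \subset L -> B \subset M -> C \subset N -> dot v (dv A B C) == 0.
    by move=> sA sB sC; apply/v0/memDP; exists A, B, C.
  rewrite !inE => /orP [/orP [kL | kM] | kN].
  - move: (v0dv [set k] set0 set0); rewrite sub1set kL !sub0set dot_dv big_set1 !big_set0.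
    by rewrite !mulr0 !addr0; apply.
  - move: (v0dv set0 [set k] set0); rewrite sub1set kM !sub0set dot_dv big_set1 !big_set0.
    by rewrite mulr0 addr0 add0r mulf_eq0 (negbTE om_neq0); apply.
  - move: (v0dv set0 set0 [set k]); rewrite sub1set kN !sub0set dot_dv big_set1 !big_set0.
    by rewrite mulr0 !add0r mulf_eq0 expf_eq0 (negbTE om_neq0) andbF; apply.
have sU X k : X \subset U -> k \in X -> v 0 k = 0 by move=> /subsetP sXU /sXU /v0 /eqP.
rewrite dot_dv !big1 ?mulr0 ?addr0 // => k; apply: sU.
- by rewrite (subset_trans sC) // subsetUr.
- by rewrite (subset_trans sB) // (subset_trans (subsetUr L M)) // subsetUl.
- by rewrite (subset_trans sA) // (subset_trans (subsetUl L M)) // subsetUl.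
Qed.

Lemma cPDs_eq0 v : (cP Ds v == 0) = [forall k in U, v 0 k == 0].
Proof.
rewrite cP_eq0 -dot_D_eq0; apply/forall_inP/forall_inP => v0 d Dd.
  by case: (d =P 0) => [-> | /eqP d0]; [rewrite dot0r | apply: v0; rewrite in_setD1 d0].
by apply: v0; case/setD1P: Dd.
Qed.

Lemma Zcount_Ds0 : Zcount Ds 0 = (2 ^ (3 * (m - #|U|)))%N.
Proof.
rewrite expnM (_ : 2 ^ 3 = #|F|)%N; last by rewrite HF.
rewrite Zcount0 -card_rV_vanishing.
by apply: eq_card => v; rewrite !inE cPDs_eq0.
Qed.

Lemma dim_CPvs : \dim (CPvs Ds) = #|U|.
Proof.
have U_le_m : (#|U| <= m)%N by rewrite -[X in (_ <= X)%N]card_ord max_card.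
have cardC : #|CP Ds| = #|CPvs Ds| by apply: eq_card => c; rewrite CP_CPvs.
have := card_CP_mul_Zcount0 Ds; rewrite Zcount_Ds0 cardC card_vspace HF expnM -expnD.
by move/(expnI (isT : 1 < 8)%N)/(canRL (addnK _)) ->; rewrite subKn.
Qed.

Lemma card_Ds : #|Ds| = (2 ^ s - 1)%N.
Proof. by have := cardsD1 0 D; rewrite mem0D card_D => ->; rewrite addKn. Qed.

Hypotheses (HL : L != set0) (HM : M != set0) (HN : N != set0).
Hypothesis H2 : (2 <= (L :\: (M :|: N) != set0) + (M :\: (N :|: L) != set0)
  + (N :\: (L :|: M) != set0))%N.

Lemma s_ge3 : (3 <= s)%N.
Proof. by move: HL HM HN; rewrite -!card_gt0; lia. Qed.

Lemma meet_count_attained j : (j <= 3)%N -> exists S, meet_count S = j.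
Proof.
have privX (X Y Z : {set 'I_m}) : X :&: (X :\: (Y :|: Z)) = X :\: (Y :|: Z).
  exact/setIidPr/subsetDl.
have privY (X Y Z : {set 'I_m}) : Y :&: (X :\: (Y :|: Z)) = set0.
  by apply/setP => k; rewrite !inE; case: (k \in Y).
have privZ (X Y Z : {set 'I_m}) : Z :&: (X :\: (Y :|: Z)) = set0.
  by apply/setP => k; rewrite !inE; case: (k \in Z); rewrite ?orbT.
(* Private elements of two of the three sets give the meet counts 1 and 2. *)
have [S1 [S2 [meet1 meet2]]] : exists S1 S2, meet_count S1 = 1%N /\ meet_count S2 = 2%N.
  have priv := (privX L M N, privX M N L, privX N L M, privY L M N, privY M N L,
    privY N L M, privZ L M N, privZ M N L, privZ N L M).
  move: H2; rewrite /meet_count.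
  case: (boolP (L :\: _ != set0)) => pL; case: (boolP (M :\: _ != set0)) => pM;
    case: (boolP (N :\: _ != set0)) => pN //= _.
  1,2: exists (L :\: (M :|: N)), (L :\: (M :|: N) :|: M :\: (N :|: L)).
  3: exists (L :\: (M :|: N)), (L :\: (M :|: N) :|: N :\: (L :|: M)).
  4: exists (M :\: (N :|: L)), (M :\: (N :|: L) :|: N :\: (L :|: M)).
  1-4: by rewrite ?setIUr !priv ?setU0 ?set0U ?pL ?pM ?pN eqxx.
case: j => [_|[_|[_|[_|//]]]]; [exists set0 | exists S1 | exists S2 | exists setT] => //.
  by rewrite /meet_count !setI0 eqxx.
by rewrite /meet_count !setIT HL HM HN.
Qed.

Lemma codeword_weight_mem w : (exists2 c, c \in CP Ds & wt c = w) <->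
  w \in [:: 0; 2 ^ s.-1; 6 * 2 ^ (s - 3); 7 * 2 ^ (s - 3)]%N.
Proof.
rewrite -(subn_exp2_iota s_ge3).
split=> [[_ /imsetP [v _ ->] <-] | /mapP [j /[!mem_iota] /andP [_ j4] ->]].
  by have [j j3 /wt_cPD ->] := dot_image_pow v; apply/mapP; exists j; rewrite ?mem_iota.
have [S mS] := meet_count_attained j4; exists (cP Ds (ind F S)).
  by apply/imsetP; exists (ind F S).
by rewrite (wt_cPD (card_dot_image_ind S)) mS.
Qed.

Lemma codeword_weightP w : (exists2 c, c \in CP Ds & wt c = w) <->
  [\/ w = 0%N, w = (2 ^ s.-1)%N, w = (6 * 2 ^ (s - 3))%N | w = (7 * 2 ^ (s - 3))%N].
Proof.
apply: iff_trans (codeword_weight_mem w) _; rewrite !inE.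
split=> [/or4P [] /eqP -> | [] ->]; rewrite ?eqxx ?orbT //.
- exact: Or41.
- exact: Or42.
- exact: Or43.
- exact: Or44.
Qed.

Lemma expn_s : (2 ^ s = 8 * 2 ^ (s - 3))%N.
Proof. by rewrite -[8%N]/(2 ^ 3)%N -expnD subnKC ?s_ge3. Qed.

Lemma expn_s_pred : (2 ^ s.-1 = 4 * 2 ^ (s - 3))%N.
Proof. by rewrite -[4%N]/(2 ^ 2)%N -expnD; congr (2 ^ _)%N; have := s_ge3; lia. Qed.

Lemma nonzero_codeword_weight c : c \in CP Ds -> c != 0 ->
  wt c \in [:: 2 ^ s.-1; 6 * 2 ^ (s - 3); 7 * 2 ^ (s - 3)]%N.
Proof.
move=> Cc c0; have : wt c \in [:: 0; 2 ^ s.-1; 6 * 2 ^ (s - 3); 7 * 2 ^ (s - 3)]%N.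
  by apply/codeword_weight_mem; exists c.
by rewrite in_cons wt_eq0 (negbTE c0).
Qed.

Lemma mem_weights w :
  (w \in weights (CP Ds)) = (w \in [:: 2 ^ s.-1; 6 * 2 ^ (s - 3); 7 * 2 ^ (s - 3)]%N).
Proof.
rewrite mem_undup; apply/mapP/idP => [[c] | ws].
  by rewrite mem_filter mem_enum => /andP [c0 Cc] ->; apply: nonzero_codeword_weight.
have /codeword_weight_mem [c Cc wc] : w \in [:: 0; 2 ^ s.-1; 6 * 2 ^ (s - 3); 7 * 2 ^ (s - 3)]%N.
  by rewrite in_cons ws orbT.
exists c => //; rewrite mem_filter mem_enum Cc andbT -wt_eq0 wc.
have x_gt0 : (0 < 2 ^ (s - 3))%N by rewrite expn_gt0.
by move: ws; rewrite !inE expn_s_pred; lia.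
Qed.

Lemma l_weight_CPDs : l_weight (CP Ds) 3.
Proof.
have uniq_w : uniq [:: 2 ^ s.-1; 6 * 2 ^ (s - 3); 7 * 2 ^ (s - 3)]%N.
  have x_gt0 : (0 < 2 ^ (s - 3))%N by rewrite expn_gt0.
  by rewrite /= !inE expn_s_pred !eqn_pmul2r.
by rewrite /l_weight (perm_size (uniq_perm (undup_uniq _) uniq_w mem_weights)).
Qed.

Lemma min_dist_CPDs : min_dist (CP Ds) = (2 ^ s.-1)%N.
Proof.
have [c Cc wc] : exists2 c, c \in CP Ds & wt c = (2 ^ s.-1)%N.
  by apply/codeword_weight_mem; rewrite !inE eqxx orbT.
apply/eqP; rewrite eqn_leq; apply/andP; split.
  have c_nz : (c \in CP Ds) && (c != 0) by rewrite Cc -wt_eq0 wc expn_eq0.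
  by rewrite /min_dist -wc; apply: (@Order.TotalTheory.bigmin_le_cond _ nat _ _ c).
have x_gt0 : (0 < 2 ^ (s - 3))%N by rewrite expn_gt0.
apply: (big_ind (fun x => 2 ^ s.-1 <= x)%N) => [|x y | c' /andP [Cc' c'0]].
- by rewrite card_Ds expn_s expn_s_pred; lia.
- by rewrite leq_min => -> ->.
- by move: (nonzero_codeword_weight Cc' c'0); rewrite !inE expn_s_pred; lia.
Qed.

End ThreeWeightCode.

Theorem mainTheorem3 (F : finFieldType) (HF : #|F| = 8%N) (om : F)
  (Hom : om ^+ 3 + om + 1 = 0) (m : nat) (L M N : {set 'I_m})
  (HL : L != set0) (HM : M != set0) (HN : N != set0)
  (H2 : (2 <= (L :\: (M :|: N) != set0) + (M :\: (N :|: L) != set0)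
              + (N :\: (L :|: M) != set0))%N) :
  let D := Dset om (Delta F L) (Delta F M) (Delta F N) in
  let Ds := D :\ 0 in
  let s := (#|L| + #|M| + #|N|)%N in
  let C := CP Ds in
  (* linear code over F_8 *)
  (forall c, (c \in C) = (c \in CPvs Ds)) /\
  (* 3-weight *)
  l_weight C 3 /\
  (* length *)
  #|Ds| = (2 ^ s - 1)%N /\
  (* dimension *)
  \dim (CPvs Ds) = #|L :|: M :|: N| /\
  (* minimum distance *)
  min_dist C = (2 ^ s.-1)%N /\
  (* weights of the codewords *)
  (forall w, (exists2 c, c \in C & wt c = w) <->
     [\/ w = 0%N, w = (2 ^ s.-1)%N, w = (6 * 2 ^ (s - 3))%N
       | w = (7 * 2 ^ (s - 3))%N]) /\
  (* weight distribution relation *)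
  Zcount Ds 0 = (2 ^ (3 * (m - #|L :|: M :|: N|)))%N /\
  (forall i, (i <= #|Ds|)%N -> Zcount Ds i = (Zcount Ds 0 * Acount C i)%N).
Proof.
move=> D Ds s C.
split; first exact: CP_CPvs.
split; first exact: l_weight_CPDs.
split; first exact: card_Ds.
split; first exact: dim_CPvs.
split; first exact: min_dist_CPDs.
split; first exact: codeword_weightP.
split; first exact: Zcount_Ds0.
by move=> i _; exact: Zcount_mul.
Qed.
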